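(* Let $R>q>1$ and $f\in H(\mathbb{D}_R)$ with $f(z)=\sum_{m=0}^\infty a_mz^m$. Then for $|z|<R/q^2$, \[L_q(f;z)=\sum_{m=2}^\infty a_m\left(q\sum_{i=1}^{m-1}[i]_q+\sum_{i=1}^{m-1}[i]_{q^{-1}}\right)z^{m-1}(1-z).\]
   Context: For an integer $i\ge0$ and $p>0$, $[i]_p=1+p+\dots+p^{i-1}$. $\mathbb{D}_R=\{|z|<R\}$, $H(\mathbb{D}_R)$ the analytic functions on it. For $p>0$, $p\ne1$, $D_pf(z)=\frac{f(pz)-f(z)}{(p-1)z}$ for $z\ne0$ and $D_pf(0)=f'(0)$. For $|z|<R/q^2$, $L_q(f;z)=\frac{(1-z)\,q\,(D_qf(z)-D_{q^{-1}}f(z))}{q-1}$. *)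

From Stdlib Require Import Reals ClassicalEpsilon.
From Coquelicot Require Import Coquelicot.
Open Scope R_scope.

Fixpoint qint (p : R) (i : nat) : R :=
  match i with
  | O => 0
  | S j => qint p j + p ^ j
  end.

Definition cderiv (f : C -> C) (z : C) : C :=
  epsilon (inhabits (RtoC 0)) (fun l : C => @is_derive C_AbsRing C_NormedModule f z l).

Definition Dq (p : R) (f : C -> C) (z : C) : C :=
  if Ceq_dec z (RtoC 0) then cderiv f (RtoC 0)
  else ((f (RtoC p * z) - f z) / ((RtoC p - RtoC 1) * z))%C.

Definition Lq (q : R) (f : C -> C) (z : C) : C :=
  ((RtoC 1 - z) * RtoC q * (Dq q f z - Dq (/ q) f z) / (RtoC q - RtoC 1))%C.

(* For z <> 0 and p <> 1, dividing the power series of f(pz) - f(z) by (p - 1) z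
   gives D_p f(z) = sum_m a_m [m]_p z^(m-1), since (p - 1) [m]_p = p^m - 1.
   Hence L_q(f; z) = (1 - z) q/(q - 1) sum_m a_m ([m]_q - [m]_(1/q)) z^(m-1), and the
   claim reduces to the real identity
   (q - 1) (q sum_(i=1..n) [i]_q + sum_(i=1..n) [i]_(1/q)) = q ([n+1]_q - [n+1]_(1/q)),
   proved by induction on n.  At z = 0 both D-terms equal f'(0), so both sides vanish. *)
From Stdlib Require Import Reals ClassicalEpsilon Lia Lra.
From Coquelicot Require Import Coquelicot.
Open Scope R_scope.

Lemma qint_geom (p : R) (n : nat) : (p - 1) * qint p n = p ^ n - 1.
Proof. induction n as [|n IH]; simpl; [ring|]. rewrite Rmult_plus_distr_l, IH. ring. Qed.

Lemma qint_le1_indep (p p' : R) (m : nat) : (m <= 1)%nat -> qint p m = qint p' m.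
Proof. intros Hm. destruct m as [|[|m]]; simpl; [reflexivity | ring | lia]. Qed.

Lemma sum_qint_qint_inv (q : R) (n : nat) : q <> 0 ->
  (q - 1) * (q * sum_n_m (qint q) 1 n + sum_n_m (qint (/ q)) 1 n)
  = q * (qint q (S n) - qint (/ q) (S n)).
Proof.
  intros Hq0. induction n as [|n IH].
  - rewrite !sum_n_m_zero by lia. simpl. unfold zero; simpl. ring.
  - rewrite !sum_n_Sm by lia. change plus with Rplus.
    assert (Hgeom : (q - 1) * qint q (S n) = q ^ S n - 1) by apply qint_geom.
    assert (Hgeom_inv : (/ q - 1) * qint (/ q) (S n) = (/ q) ^ S n - 1)
      by apply qint_geom.
    rewrite pow_inv in Hgeom_inv.
    assert (Hpow : q ^ S n <> 0) by (apply pow_nonzero; exact Hq0).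
    transitivity ((q - 1) * (q * sum_n_m (qint q) 1 n + sum_n_m (qint (/ q)) 1 n)
                  + q * ((q - 1) * qint q (S n))
                  - q * ((/ q - 1) * qint (/ q) (S n))); [field; exact Hq0|].
    rewrite IH, Hgeom, Hgeom_inv.
    change (qint ?p (S (S n))) with (qint p (S n) + p ^ S n).
    rewrite pow_inv. field. exact Hpow.
Qed.

Lemma pow_n_Cpow (w : C) (n : nat) : @pow_n C_Ring w n = (w ^ n)%C.
Proof. induction n as [|n IH]; simpl; [reflexivity|]. rewrite IH. reflexivity. Qed.

Lemma is_series_C0 : @is_series C_AbsRing C_NormedModule (fun _ => RtoC 0) (RtoC 0).
Proof.
  eapply is_series_ext; [|exact (@is_pseries_0 C_AbsRing C_NormedModule (fun _ => RtoC 0))].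
  intro n. unfold scal; simpl; unfold mult; simpl. ring.
Qed.

Lemma is_series_Dq (p : R) (f : C -> C) (a : nat -> C) (z : C) :
  p <> 1 -> z <> RtoC 0 ->
  @is_pseries C_AbsRing C_NormedModule a z (f z) ->
  @is_pseries C_AbsRing C_NormedModule a (RtoC p * z)%C (f (RtoC p * z)%C) ->
  @is_series C_AbsRing C_NormedModule
    (fun m => a m * RtoC (qint p m) * z ^ (m - 1))%C (Dq p f z).
Proof.
  intros Hp1 Hz Sz Spz.
  assert (Hp1C : (RtoC p - RtoC 1)%C <> RtoC 0).
  { rewrite <- RtoC_minus. intro H. apply RtoC_inj in H. lra. }
  pose proof (is_series_scal (K := C_AbsRing) (/ ((RtoC p - RtoC 1) * z))%C _ _
                (is_series_minus _ _ _ _ Spz Sz)) as S.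
  replace (Dq p f z) with
    (scal (K := C_AbsRing) (/ ((RtoC p - RtoC 1) * z))%C (plus (f (RtoC p * z)%C) (opp (f z)))).
  2: { unfold Dq. destruct (Ceq_dec z 0); [contradiction|].
       unfold scal, plus, opp; simpl; unfold mult; simpl. field. split; assumption. }
  revert S. apply is_series_ext. intro m.
  change (@pow_n (AbsRing.Ring C_AbsRing) ?w m) with (@pow_n C_Ring w m).
  rewrite (pow_n_Cpow z), pow_n_Cpow, Cpow_mult_l, <- RtoC_pow.
  unfold scal, plus, opp; simpl; unfold mult; simpl.
  destruct m as [|k]; simpl qint; [simpl; ring|].
  assert (Hgeom : p ^ S k = 1 + (p - 1) * qint p (S k)) by (rewrite qint_geom; ring).
  rewrite Hgeom, Cpow_S, RtoC_plus, RtoC_mult, RtoC_minus.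
  replace (S k - 1)%nat with k by lia. simpl qint.
  field. split; assumption.
Qed.

Lemma Lq_at_0 (q : R) (f : C -> C) : Lq q f (RtoC 0) = RtoC 0.
Proof. unfold Lq, Dq. destruct (Ceq_dec 0 0); [|congruence]. unfold Cdiv. ring. Qed.

Lemma is_series_Lq (q : R) (f : C -> C) (a : nat -> C) (z : C) :
  q <> 0 -> q <> 1 -> z <> RtoC 0 ->
  @is_pseries C_AbsRing C_NormedModule a z (f z) ->
  @is_pseries C_AbsRing C_NormedModule a (RtoC q * z)%C (f (RtoC q * z)%C) ->
  @is_pseries C_AbsRing C_NormedModule a (RtoC (/ q) * z)%C (f (RtoC (/ q) * z)%C) ->
  @is_series C_AbsRing C_NormedModule
    (fun m => a m * RtoC (q / (q - 1) * (qint q m - qint (/ q) m))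
              * z ^ (m - 1) * (RtoC 1 - z))%C
    (Lq q f z).
Proof.
  intros Hq0 Hq1 Hz Sz Sqz Sqiz.
  assert (Hqi1 : / q <> 1).
  { intro H. apply Hq1. rewrite <- (Rinv_inv q), H. apply Rinv_1. }
  assert (Hq1C : (RtoC q - RtoC 1)%C <> RtoC 0).
  { rewrite <- RtoC_minus. intro H. apply RtoC_inj in H. lra. }
  pose proof (is_series_scal (K := C_AbsRing) ((RtoC 1 - z) * RtoC q / (RtoC q - RtoC 1))%C _ _
    (is_series_minus _ _ _ _ (is_series_Dq q f a z Hq1 Hz Sz Sqz)
                             (is_series_Dq (/ q) f a z Hqi1 Hz Sz Sqiz))) as S.
  replace (Lq q f z) with
    (scal (K := C_AbsRing) ((RtoC 1 - z) * RtoC q / (RtoC q - RtoC 1))%C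
          (plus (Dq q f z) (opp (Dq (/ q) f z)))).
  2: { unfold Lq, scal, plus, opp; simpl; unfold mult; simpl. field. exact Hq1C. }
  revert S. apply is_series_ext. intro m.
  unfold scal, plus, opp; simpl; unfold mult; simpl.
  rewrite RtoC_mult, RtoC_div, RtoC_minus, RtoC_minus by lra.
  field. exact Hq1C.
Qed.

Lemma qint_diff_sums (q : R) (m : nat) : q <> 0 -> q <> 1 ->
  q / (q - 1) * (qint q m - qint (/ q) m)
  = if (m <? 2)%nat then 0
    else q * sum_n_m (fun i => qint q i) 1 (m - 1)
         + sum_n_m (fun i => qint (/ q) i) 1 (m - 1).
Proof.
  intros Hq0 Hq1. destruct (m <? 2)%nat eqn:Hm.
  - apply Nat.ltb_lt in Hm. rewrite (qint_le1_indep q (/ q) m) by lia. ring.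
  - apply Nat.ltb_ge in Hm.
    apply (Rmult_eq_reg_l (q - 1)); [|lra].
    rewrite sum_qint_qint_inv by exact Hq0.
    replace (S (m - 1)) with m by lia. field. lra.
Qed.

Lemma Cmod_scaled_lt (Rad q : R) (z : C) : 1 < q -> Cmod z < Rad / q ^ 2 ->
  Cmod z < Rad /\ Cmod (RtoC q * z) < Rad /\ Cmod (RtoC (/ q) * z) < Rad.
Proof.
  intros Hq Hz.
  assert (Hr : 0 <= Cmod z) by apply Cmod_ge_0.
  assert (HRad : Rad = Rad / q ^ 2 * q ^ 2) by (field; lra).
  set (s := Rad / q ^ 2) in *. clearbody s.
  assert (Hqi : 0 < / q) by (apply Rinv_0_lt_compat; lra).
  assert (Hqqi : q * / q = 1) by (field; lra).
  assert (Hqi1 : / q < 1) by nra.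
  assert (Hq2 : q < q ^ 2) by nra.
  rewrite !Cmod_mult, !Cmod_R, !Rabs_pos_eq by lra.
  rewrite HRad. repeat split; nra.
Qed.

Theorem mainTheorem8 (Rad q : R) (f : C -> C) (a : nat -> C) :
  1 < q -> q < Rad ->
  (forall z : C, Cmod z < Rad -> @is_pseries C_AbsRing C_NormedModule a z (f z)) ->
  forall z : C, Cmod z < Rad / q ^ 2 ->
  @is_series C_AbsRing C_NormedModule
    (fun m : nat =>
       if (m <? 2)%nat then RtoC 0
       else (a m
             * RtoC (q * sum_n_m (fun i => qint q i) 1 (m - 1)
                     + sum_n_m (fun i => qint (/ q) i) 1 (m - 1))
             * pow_n z (m - 1) * (RtoC 1 - z))%C)
    (Lq q f z).
Proof.
  intros Hq _ Hf z Hz.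
  destruct (Cmod_scaled_lt Rad q z Hq Hz) as (Hz1 & Hqz & Hqiz).
  assert (Hq0 : q <> 0) by lra.
  assert (Hq1 : q <> 1) by lra.
  destruct (Ceq_dec z 0) as [-> | Hz0].
  - rewrite Lq_at_0. apply (is_series_ext (fun _ => RtoC 0)); [|exact is_series_C0].
    intro m. destruct (m <? 2)%nat eqn:Hm; [reflexivity|].
    apply Nat.ltb_ge in Hm. replace (m - 1)%nat with (S (m - 2)) by lia.
    rewrite pow_n_Cpow, Cpow_S. simpl. ring.
  - eapply is_series_ext;
      [|exact (is_series_Lq q f a z Hq0 Hq1 Hz0 (Hf _ Hz1) (Hf _ Hqz) (Hf _ Hqiz))].
    intro m; cbv beta. rewrite qint_diff_sums by assumption.
    destruct (m <? 2)%nat; simpl; [ring | now rewrite (pow_n_Cpow z (m - 1))].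
Qed.
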